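(* Let $\mathbb{F}$ be a field and $n\ge 0$ an integer with $|\mathbb{F}| \geq 2n-1$. Let $V$ be an $\mathbb{F}$-vector space of dimension $2n$, and let $s$ be a symplectic form on $V$. Let $\mathcal{S}$ be a linear subspace of $\mathcal{A}_s$ that has trivial spectrum. Then $\dim \mathcal{S} \leq n(n-1)$.
   Context: A bilinear form $b$ on $V$ is alternating if $b(x,x)=0$ for all $x\in V$, and symplectic if it is alternating and non-degenerate. $\mathcal{A}_s$ denotes the space of all $s$-alternating endomorphisms of $V$, i.e. endomorphisms $u$ of $V$ such that $s(x,u(x))=0$ for all $x\in V$. An endomorphism $u$ has trivial spectrum if it has no nonzero eigenvalue in $\mathbb{F}$; a linear subspace of endomorphisms has trivial spectrum if all its elements have trivial spectrum. The field $\mathbb{F}$ may have any characteristic, including 2. *)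

From HB Require Import structures.
From mathcomp Require Import all_boot all_order all_algebra.
From mathcomp Require Import vector.
Set Implicit Arguments. Unset Strict Implicit. Unset Printing Implicit Defensive.
Import GRing.Theory.
Local Open Scope ring_scope.

Definition bilinear_form (F : fieldType) (V : vectType F) (b : V -> V -> F) : Prop :=
  (forall (a : F) (x y z : V), b (a *: x + y) z = a * b x z + b y z) /\
  (forall (a : F) (x y z : V), b x (a *: y + z) = a * b x y + b x z).

Definition alternating_form (F : fieldType) (V : vectType F) (b : V -> V -> F) : Prop :=
  bilinear_form b /\ forall x : V, b x x = 0.

Definition nondegenerate_form (F : fieldType) (V : vectType F) (b : V -> V -> F) : Prop :=
  forall x : V, (forall y : V, b x y = 0) -> x = 0.

Definition symplectic_form (F : fieldType) (V : vectType F) (b : V -> V -> F) : Prop :=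
  alternating_form b /\ nondegenerate_form b.

(* u is s-alternating: s(x, u x) = 0 for all x  (u in A_s) *)
Definition s_alternating (F : fieldType) (V : vectType F) (s : V -> V -> F)
  (u : 'End(V)) : Prop := forall x : V, s x (u x) = 0.

Definition trivial_spectrum (F : fieldType) (V : vectType F) (u : 'End(V)) : Prop :=
  forall a : F, a != 0 -> ~~ passmx.leigenvalue u a.

Definition card_at_least (F : fieldType) (k : nat) : Prop :=
  exists l : seq F, uniq l /\ (k <= size l)%N.

From HB Require Import structures.
From mathcomp Require Import all_boot all_order all_algebra.
From mathcomp Require Import vector.
From mathcomp Require Import zify.
From Stdlib Require Import Classical_Prop.
Set Implicit Arguments. Unset Strict Implicit. Unset Printing Implicit Defensive.
Import GRing.Theory.
Local Open Scope ring_scope.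

(* Pick [x], [z] with [s x z = 1] and let [C] be their
   [s]-orthogonal, a symplectic space of dimension [2n - 2].  Splitting [S]
   along [u |-> u x], then compressing the kernel [K] to [C], and evaluating
   the kernel [K0] of the compression at [z] gives
   [dim S = dim (S x) + dim (compress K) + dim (K0 z)].  The compressions
   satisfy the hypotheses on [C], so induction bounds the middle term by
   [(n-1)(n-2)]; the spaces [S x + <x>] and [K0 z + <x>] are [s]-orthogonal and
   both contain [x] as a direct summand, so the outer terms add up to at most
   [2n - 2].  The one non-formal orthogonality [s x (u (v z)) = 0] comes from
   the polynomial [l |-> s x (q(l) (l - u)^-1 v z)], with [q] annihilating [v z]
   under [u]: it vanishes at every [l != 0] because [S] has trivial spectrum,
   and its degree is smaller than the number of nonzero scalars. *)

Definition linear_of (F : fieldType) (U W : lmodType F) (f : U -> W) (hf : linear f) :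
  {linear U -> W} := HB.pack f (GRing.isLinear.Build F U W _ f hf).

Lemma linear_ofE (F : fieldType) (U W : vectType F) (f : U -> W) (hf : linear f) x :
  linfun (linear_of hf) x = f x.
Proof. by rewrite lfunE. Qed.

Lemma card_at_least_le (F : fieldType) k k' :
  (k' <= k)%N -> card_at_least F k -> card_at_least F k'.
Proof. by move=> le_k [l [ul kl]]; exists l; split => //; apply: leq_trans kl. Qed.

Section BilinearForm.
Variables (F : fieldType) (V : vectType F) (s : V -> V -> F).
Hypothesis hb : bilinear_form s.

Lemma formDl x y z : s (x + y) z = s x z + s y z.
Proof. by have := hb.1 1 x y z; rewrite scale1r mul1r. Qed.
Lemma formDr x y z : s z (x + y) = s z x + s z y.
Proof. by have := hb.2 1 z x y; rewrite scale1r mul1r. Qed.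
Lemma form0l z : s 0 z = 0.
Proof. by apply/(addrI (s 0 z)); rewrite -formDl !addr0. Qed.
Lemma form0r z : s z 0 = 0.
Proof. by apply/(addrI (s z 0)); rewrite -formDr !addr0. Qed.
Lemma formZl a x z : s (a *: x) z = a * s x z.
Proof. by have := hb.1 a x 0 z; rewrite addr0 form0l addr0. Qed.
Lemma formZr a x z : s z (a *: x) = a * s z x.
Proof. by have := hb.2 a z x 0; rewrite addr0 form0r addr0. Qed.
Lemma formNl x z : s (- x) z = - s x z.
Proof. by rewrite -scaleN1r formZl mulN1r. Qed.
Lemma formNr x z : s z (- x) = - s z x.
Proof. by rewrite -scaleN1r formZr mulN1r. Qed.
Lemma formBl x y z : s (x - y) z = s x z - s y z.
Proof. by rewrite formDl formNl. Qed.
Lemma formBr x y z : s z (x - y) = s z x - s z y.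
Proof. by rewrite formDr formNr. Qed.
Lemma form_sumr I (r : seq I) (P : pred I) (f : I -> V) z :
  s z (\sum_(i <- r | P i) f i) = \sum_(i <- r | P i) s z (f i).
Proof. exact: (big_morph (s z) (fun x y => formDr x y z) (form0r z)). Qed.

Lemma form_linl z : linear (fun x : V => (s x z : F^o)).
Proof. by move=> a x y; rewrite formDl formZl. Qed.
Lemma form_linr z : linear (fun x : V => (s z x : F^o)).
Proof. by move=> a x y; rewrite formDr formZr. Qed.

Hypothesis halt : forall x, s x x = 0.

Lemma form_skew x y : s x y = - s y x.
Proof.
have := halt (x + y); rewrite formDl !formDr !halt add0r addr0 => /eqP.
by rewrite addr_eq0 => /eqP.
Qed.

Hypothesis hnd : nondegenerate_form s.

Lemma nondegenerate_formr x : (forall y, s y x = 0) -> x = 0.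
Proof. by move=> h; apply: hnd => y; rewrite form_skew h oppr0. Qed.

Lemma exists_hyperbolic_pair : \dim {:V} != 0%N -> exists x z, s x z = 1.
Proof.
move=> dimV0; pose x := vpick {:V}.
have x0 : x != 0 by rewrite vpick0 -dimv_eq0.
have [y xy0] : exists y, s x y != 0.
  apply: NNPP => all0; move/eqP: x0; apply; apply: hnd => y.
  by apply/eqP; apply: NNPP => /negP xy0; apply: all0; exists y.
by exists x, ((s x y)^-1 *: y); rewrite formZr mulVf.
Qed.

(* [w |-> s _ w] is injective from [V] to its dual, hence onto by dimension. *)
Lemma form_represents (U : {vspace V}) (g : 'Hom(subvs_of U, F^o)) :
  exists w, forall y, g y = s (vsval y) w.
Proof.
have dual_lin : linear (fun w => linfun (linear_of (form_linl w)) : 'Hom(V, F^o)).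
  by move=> a w1 w2; apply/lfunP => y; rewrite !lfun_simp /= formDr formZr.
pose dual := linfun (linear_of dual_lin).
have dualE w y : dual w y = s y w by rewrite !linear_ofE.
have dual_inj : (fullv :&: lker dual = 0)%VS.
  apply/eqP; rewrite -subv0; apply/subvP => w; rewrite memv_cap memv_ker memv0.
  case/andP=> _ /eqP dw0; apply/eqP; apply: nondegenerate_formr => y.
  by rewrite -dualE dw0 lfunE.
have dual_onto : limg dual = fullv.
  apply/eqP; rewrite eqEdim subvf /= limg_dim_eq // !dimvf.
  by change (dim V * 1 <= dim V)%N; rewrite muln1.
have : (g \o linfun (vsproj U))%VF \in limg dual by rewrite dual_onto memvf.
case/memv_imgP => w _ gw; exists w => y.
by rewrite -dualE -gw comp_lfunE lfunE /= vsvalK.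
Qed.

Lemma dimv_orthogonal (U1 U2 : {vspace V}) :
  (forall a b, a \in U1 -> b \in U2 -> s a b = 0) ->
  (\dim U1 + \dim U2 <= \dim {:V})%N.
Proof.
move=> orthU.
have rho_lin : linear (fun w => linfun (linear_of (form_linl w) \o vsval)
                                  : 'Hom(subvs_of U1, F^o)).
  by move=> a w1 w2; apply/lfunP => y; rewrite !lfun_simp /= formDr formZr.
pose rho := linfun (linear_of rho_lin).
have rhoE w y : rho w y = s (vsval y) w by rewrite linear_ofE lfunE.
have dim_rho : \dim (limg rho) = \dim U1.
  suff -> : limg rho = fullv by rewrite dimvf; change (\dim U1 * 1 = \dim U1)%N; rewrite muln1.
  apply/eqP; rewrite eqEsubv subvf /=; apply/subvP => g _.
  have [w gw] := form_represents g.
  suff -> : g = rho w by apply: memv_img (memvf _).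
  by apply/lfunP => y; rewrite rhoE gw.
rewrite -(limg_ker_dim rho fullv) capfv dim_rho addnC leq_add2r.
apply: dimvS; apply/subvP => b U2b; rewrite memv_ker.
by apply/eqP/lfunP => y; rewrite rhoE lfunE orthU ?subvsP.
Qed.

End BilinearForm.

Section AlternatingEndomorphism.
Variables (F : fieldType) (V : vectType F) (s : V -> V -> F) (u : 'End(V)).
Hypotheses (ha : alternating_form s) (hu : s_alternating s u).

Lemma s_alternating_adj a b : s a (u b) = s (u a) b.
Proof.
have := hu (a + b); rewrite linearD /= !(formDl ha.1, formDr ha.1) hu hu.
rewrite add0r addr0 => /eqP; rewrite addr_eq0 => /eqP ->.
by rewrite -form_skew; case: ha.
Qed.

Lemma s_alternating_iter_adj j a b : s a (iter j u b) = s (iter j u a) b.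
Proof.
by elim: j a => [|j IHj] a //=; rewrite s_alternating_adj IHj -iterSr.
Qed.

(* With [j = k + (e + k)], [s a (u^j a) = s (u^k a) (u^e (u^k a))] and [e <= 1]. *)
Lemma s_alternating_iter j a : s a (iter j u a) = 0.
Proof.
have -> : j = (j./2 + (odd j + j./2))%N by rewrite addnCA addnn odd_double_half.
rewrite iterD s_alternating_iter_adj iterD; case: (odd j) => /=; first exact: hu.
by case: ha.
Qed.

End AlternatingEndomorphism.

Lemma trivial_spectrum_eigenvector (F : fieldType) (V : vectType F) (u : 'End(V)) l b :
  trivial_spectrum u -> l != 0 -> u b = l *: b -> b = 0.
Proof.
move=> /(_ l) hu /hu; rewrite negbK => /eqP eig0 ub.
have : b \in passmx.leigenspace u l by rewrite memv_ker !lfun_simp /= ub subrr.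
by rewrite eig0 memv0 => /eqP.
Qed.

Lemma no_eigenvector_trivial_spectrum (F : fieldType) (V : vectType F) (u : 'End(V)) :
  (forall l b, l != 0 -> u b = l *: b -> b = 0) -> trivial_spectrum u.
Proof.
move=> eig0 l l0; rewrite negbK -subv0.
apply/subvP => b; rewrite memv_ker !lfun_simp /= subr_eq0 memv0 => /eqP ub.
by rewrite (eig0 l b l0 ub).
Qed.

Lemma eval_linear (F : fieldType) (V : vectType F) (y : V) :
  linear (fun u : 'End(V) => u y).
Proof. by move=> a u1 u2; rewrite !lfun_simp. Qed.

Lemma dimv_add_line (F : fieldType) (V : vectType F) (U : {vspace V}) v :
  v \notin U -> \dim (U + <[v]>) = (\dim U).+1.
Proof.
move=> vU; have v0 : v != 0 by apply: contraNneq vU => ->; rewrite mem0v.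
have := dimv_sum_cap U <[v]>; rewrite dim_vline v0 addn1.
suff -> : (U :&: <[v]> = 0)%VS by rewrite dimv0 addn0.
apply/eqP; rewrite -subv0; apply/subvP => y; rewrite memv_cap memv0.
case/andP => yU /vlineP [a ya]; apply: contraTT vU; rewrite ya scaler_eq0 negb_or.
by case/andP => a0 _; rewrite -(scalerK a0 v) rpredZ -?ya.
Qed.

Lemma poly_nonzero_roots_eq0 (F : fieldType) k (p : {poly F}) :
  card_at_least F k.+1 -> (size p <= k)%N -> (forall l, l != 0 -> p.[l] = 0) -> p = 0.
Proof.
move=> [l [ul szl]] szp p_root; apply/eqP; apply: contraT => p0.
pose nz := [seq a <- l | a != 0].
have : (size nz < size p)%N.
  apply: max_poly_roots p0 _ (filter_uniq _ ul).
  by apply/allP => a; rewrite mem_filter => /andP[a0 _]; rewrite /root p_root.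
suff : (k <= size nz)%N by lia.
have zero_le1 : (count (predC (fun a : F => a != 0%R)) l <= 1)%N.
  rewrite (@eq_count _ _ (pred1 (0 : F))) => [|a /=]; last by rewrite negbK.
  by rewrite count_uniq_mem // leq_b1.
rewrite /nz size_filter -(leq_add2r (count (predC (fun a : F => a != 0%R)) l)).
by rewrite count_predC; apply: leq_trans szl; rewrite -addn1 leq_add2l.
Qed.

Section Krylov.
Variables (F : fieldType) (V : vectType F) (u : 'End(V)) (w : V).

(* [krylov_quot l j = ((l - u)^-1 (l^j - u^j)) w = sum_(i < j) l^(j-1-i) u^i w]. *)
Fixpoint krylov_quot (l : F) (j : nat) : V :=
  if j is j'.+1 then l *: krylov_quot l j' + iter j' u w else 0.

Lemma krylov_quotP l j :
  l *: krylov_quot l j - u (krylov_quot l j) = l ^+ j *: w - iter j u w.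
Proof.
elim: j => [|j IHj] /=; first by rewrite !linear0 expr0 scale1r subrr addr0.
rewrite exprS -scalerA -[l ^+ j *: w](subrK (iter j u w)) -IHj.
rewrite [u (_ + _)]linearD /= linearZ /= !scalerDr scalerN opprD addrA.
by congr (_ - _); rewrite addrAC.
Qed.

Variables (s : V -> V -> F) (x : V).

Fixpoint krylov_poly (j : nat) : {poly F} :=
  if j is j'.+1 then 'X * krylov_poly j' + (s x (iter j' u w))%:P else 0.

Lemma coef_krylov_poly j i :
  (krylov_poly j)`_i = if (i < j)%N then s x (iter (j - i.+1) u w) else 0.
Proof.
elim: j i => [|j IHj] [|i] /=; rewrite ?coef0 // coefD coefXM coefC /=.
  by rewrite add0r subn1.
by rewrite IHj addr0 ltnS subSS.
Qed.

Lemma horner_krylov_poly (hb : bilinear_form s) l j :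
  (krylov_poly j).[l] = s x (krylov_quot l j).
Proof.
elim: j => [|j IHj] /=; first by rewrite horner0 form0r.
by rewrite hornerD hornerC mulrC hornerMX IHj formDr ?formZr // mulrC.
Qed.

End Krylov.

Section Resolvent.
Variables (F : fieldType) (V : vectType F) (s : V -> V -> F) (u : 'End(V)).
Hypotheses (hs : symplectic_form s) (hu : s_alternating s u) (hsp : trivial_spectrum u).
Hypothesis hF : card_at_least F (\dim {:V} - 1).

Let hb : bilinear_form s := hs.1.1.

(* The [\dim V] vectors [u^i w] all lie in the proper subspace [w^⊥]. *)
Lemma krylov_relation w : w != 0 ->
  exists q : {poly F}, [/\ q != 0, (size q <= \dim {:V})%N &
                            \sum_(j < size q) q`_j *: iter j u w = 0].
Proof.
move=> w0; set d := \dim {:V}.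
pose X := [tuple iter i u w | i < d].
have notfree : ~~ free X.
  apply/negP => freeX; move/eqP: w0; apply; apply: hs.2 => y.
  have : (<<X>> <= lker (linfun (linear_of (form_linr hb w))))%VS.
    apply/span_subvP => v /(nthP 0) [i]; rewrite size_tuple => ltid <-.
    rewrite memv_ker linear_ofE (nth_mktuple _ _ (Ordinal ltid)) /=.
    by rewrite (s_alternating_iter hs.1 hu).
  have -> : <<X>>%VS = fullv.
    by apply/eqP; rewrite eqEdim subvf /= (eqP freeX) size_tuple.
  by move/subvP/(_ y (memvf y)); rewrite memv_ker linear_ofE => /eqP.
have [r [rel [i0 ri0]]] : exists r : 'I_d -> F,
    \sum_(i < d) r i *: X`_i = 0 /\ exists i, r i != 0.
  apply: NNPP => no_rel; move/freeP: notfree; apply => r rel i.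
  by apply: NNPP => /eqP ri0; apply: no_rel; exists r; split; last exists i.
pose q := \poly_(i < d) r (insubd i0 i).
have qE (i : 'I_d) : q`_i = r i by rewrite coef_poly ltn_ord valKd.
exists q; split; last 1 first.
- rewrite (big_ord_widen d (fun j => q`_j *: iter j u w) (size_poly _ _)).
  rewrite big_mkcond -[RHS]rel; apply: eq_bigr => i _; rewrite -qE nth_mktuple.
  by case: ltnP => // /(nth_default 0) ->; rewrite scale0r.
- by apply: contraNneq ri0 => q0; rewrite -qE q0 coef0.
- exact: size_poly.
Qed.

Section KrylovCombination.
Variables (x w : V) (q : {poly F}).
Hypotheses (xw : s x w = 0) (rel : \sum_(j < size q) q`_j *: iter j u w = 0).
Hypothesis x_res : forall l a, l != 0 -> l *: a - u a = w -> s x a = 0.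

Let A l := \sum_(j < size q) q`_j *: krylov_quot u w l j.

Lemma krylov_combP l : l *: A l - u (A l) = q.[l] *: w.
Proof.
rewrite /A scaler_sumr linear_sum -sumrB.
rewrite (eq_bigr (fun j : 'I_(size q) => (q`_j * l ^+ j) *: w - q`_j *: iter j u w))
  => [|j _].
  by rewrite sumrB rel subr0 -scaler_suml horner_coef.
by rewrite -scalerA -scalerBr -krylov_quotP scalerBr [X in _ - X]linearZ /= !scalerA mulrC.
Qed.

(* [A l = q(l) (l - u)^-1 w]; when [q(l) = 0] it is an eigenvector, hence [0]. *)
Lemma krylov_comb_orth l : l != 0 -> s x (A l) = 0.
Proof.
move=> l0; have [ql0|ql0] := eqVneq q.[l] 0.
  suff -> : A l = 0 by rewrite form0r.
  apply: (trivial_spectrum_eigenvector hsp l0); apply/esym/eqP.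
  by rewrite -subr_eq0 krylov_combP ql0 scale0r.
have := @x_res l (q.[l]^-1 *: A l) l0.
rewrite [X in _ - X]linearZ /= scalerA mulrC -scalerA -scalerBr krylov_combP scalerA mulVf //.
rewrite scale1r formZr // => /(_ erefl) /eqP.
by rewrite mulf_eq0 invr_eq0 (negPf ql0) => /eqP.
Qed.

Let h := \sum_(j < size q) q`_j *: krylov_poly u w s x j.

Lemma coef_krylov_comb i :
  h`_i = \sum_(j < size q) q`_j * (if (i < j)%N then s x (iter (j - i.+1) u w) else 0).
Proof. by rewrite coef_sum; apply: eq_bigr => j _; rewrite coefZ coef_krylov_poly. Qed.

(* [h l = s x (A l)]; its coefficient of degree [size q - 2] is
   [lead_coef q * s x w = 0], so [h] has no more coefficients than [F] has
   nonzero elements. *)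
Lemma krylov_comb_poly_eq0 D : size q = D.+3 -> (D.+3 <= \dim {:V})%N -> h = 0.
Proof.
move=> szq szqV; apply: (@poly_nonzero_roots_eq0 _ D.+1).
- by apply: card_at_least_le hF; lia.
- apply/leq_sizeP => i ltDi; rewrite coef_krylov_comb big1 // => j _.
  case: ifP => [ltij|]; last by rewrite mulr0.
  have ltj : (j < D.+3)%N by rewrite -szq.
  have -> : (j - i.+1 = 0)%N by lia.
  by rewrite /= xw mulr0.
move=> l l0; rewrite -(krylov_comb_orth l0) horner_sum form_sumr //.
by apply: eq_bigr => j _; rewrite hornerZ horner_krylov_poly // formZr.
Qed.

End KrylovCombination.

Lemma resolvent_orthogonal x w : s x w = 0 ->
  (forall l a, l != 0 -> l *: a - u a = w -> s x a = 0) -> s x (u w) = 0.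
Proof.
move=> xw x_res; have [->|w0] := eqVneq w 0; first by rewrite linear0 form0r.
have [q [q0 szqV rel]] := krylov_relation w0.
have := krylov_comb_poly_eq0 xw rel x_res; have := coef_krylov_comb x w q.
have : q`_(size q).-1 != 0 by rewrite -lead_coefE lead_coef_eq0.
move: rel szqV; case szq : (size q) => [|[|[|D]]] rel szqV lq0 coefh h0.
- by move/eqP: szq; rewrite size_poly_eq0 (negPf q0).
- by move: rel; rewrite big_ord1 /= => /eqP; rewrite scaler_eq0 (negPf lq0) (negPf w0).
- move: rel => /(congr1 (s x)); rewrite big_ord_recr big_ord1 /= formDr // !formZr //.
  by rewrite xw mulr0 add0r form0r // => /eqP; rewrite mulf_eq0 (negPf lq0) => /eqP.
have := coefh D; rewrite (h0 D erefl szqV) coef0 !big_ord_recr big1 => [|j _] /=.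
  rewrite ltnn leqnn leqnSn subnn subSnn /= xw !mulr0 !add0r => /esym/eqP.
  by rewrite mulf_eq0 (negPf lq0) => /eqP.
by rewrite ltnNge (leq_trans (ltnW (ltn_ord j))) ?mulr0.
Qed.

End Resolvent.

Section HyperbolicPair.
Variables (F : fieldType) (V : vectType F) (s : V -> V -> F) (x z : V).
Hypotheses (hs : symplectic_form s) (hxz : s x z = 1).

Let hb : bilinear_form s := hs.1.1.
Let halt : forall y, s y y = 0 := hs.1.2.
Let formE := (form0l hb, form0r hb, formDl hb, formDr hb, formZl hb, formZr hb,
              formNl hb, formNr hb, formBl hb, formBr hb).

Lemma hyperbolic_zx : s z x = -1.
Proof. by rewrite (form_skew hb halt) hxz. Qed.

Lemma hyperbolic_x_neq0 : x != 0.
Proof. by apply/eqP => x0; move: hxz; rewrite x0 formE => /eqP; rewrite eq_sym oner_eq0. Qed.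

Lemma hproj_linear : linear (fun y => s x y *: z - s z y *: x).
Proof.
move=> a y1 y2; rewrite !formE !scalerDl -!scalerA scalerBr opprD !addrA.
by congr (_ - _); rewrite addrAC.
Qed.

Let p := linfun (linear_of hproj_linear).

Lemma hprojE y : p y = s x y *: z - s z y *: x.
Proof. exact: linear_ofE. Qed.

Lemma formx_hproj y : s x (p y) = s x y.
Proof. by rewrite hprojE !formE hxz halt !mulr0 subr0 mulr1. Qed.

Lemma formz_hproj y : s z (p y) = s z y.
Proof. by rewrite hprojE !formE hyperbolic_zx halt mulr0 sub0r mulrN1 opprK. Qed.

Let C := lker p.

Lemma mem_hperp c : (c \in C) = (s x c == 0) && (s z c == 0).
Proof.
rewrite memv_ker; apply/eqP/andP => [pc0 | [/eqP xc /eqP zc]].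
  by rewrite -formx_hproj -formz_hproj pc0 !formE.
by rewrite hprojE xc zc !scale0r subrr.
Qed.

Lemma hperp_sub_hproj y : y - p y \in C.
Proof. by rewrite mem_hperp !formE formx_hproj formz_hproj !subrr eqxx. Qed.

Lemma dim_hperp : \dim C = (\dim {:V} - 2)%N.
Proof.
suff dim_img : \dim (limg p) = 2%N.
  by rewrite -(limg_ker_dim p fullv) capfv dim_img addnK.
have px : p x = x by rewrite hprojE halt hyperbolic_zx scale0r sub0r scaleN1r opprK.
have pz : p z = z by rewrite hprojE hxz halt scale0r subr0 scale1r.
have -> : limg p = <<[:: z; x]>>%VS.
  apply/eqP; rewrite eqEsubv; apply/andP; split; apply/subvP => y.
    case/memv_imgP => y' _ ->; rewrite hprojE.
    by rewrite rpredB ?rpredZ // memv_span // !inE eqxx ?orbT.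
  move/coord_span ->; apply: rpred_sum => i _; apply: rpredZ.
  by case: i => [[|[|//]] _] /=; [rewrite -pz | rewrite -px]; apply: memv_img; rewrite memvf.
have : free [:: z; x].
  rewrite free_cons seq1_free hyperbolic_x_neq0 andbT span_seq1.
  apply/vlineP => -[a za]; move: hxz; rewrite za formE halt mulr0 => /eqP.
  by rewrite eq_sym oner_eq0.
by move/eqP.
Qed.

Local Notation W := (subvs_of C).
Let t (a b : W) := s (vsval a) (vsval b).

Lemma hperp_symplectic : symplectic_form t.
Proof.
split; [split; [split|] |].
- by move=> a c1 c2 c3; rewrite /t linearP /= !formE.
- by move=> a c1 c2 c3; rewrite /t linearP /= !formE.
- by move=> c; apply: halt.
move=> c tc0; apply: subvs_inj; rewrite linear0; apply: hs.2 => y.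
move: (subvsP c); rewrite mem_hperp => /andP[/eqP xc /eqP zc].
rewrite -(subrK (p y) y) formE.
have := tc0 (vsproj C (y - p y)); rewrite /t vsprojK ?hperp_sub_hproj // => ->.
rewrite hprojE !formE (form_skew hb halt _ z) (form_skew hb halt _ x) xc zc.
by rewrite oppr0 !mulr0 subrr add0r.
Qed.

Lemma dim_hperp_space : \dim {:W} = (\dim {:V} - 2)%N.
Proof. by rewrite dimvf; apply: dim_hperp. Qed.

Let compress (u : 'End(V)) : 'End(W) :=
  (linfun (vsproj C) \o (\1 - p) \o u \o linfun vsval)%VF.

Lemma compressE u c : vsval (compress u c) = u (vsval c) - p (u (vsval c)).
Proof.
have := hperp_sub_hproj (u (vsval c)); rewrite hprojE => memC.
by rewrite !lfun_simp /= vsprojK.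
Qed.

Lemma compress_linear : linear compress.
Proof.
move=> a u1 u2.
by rewrite /compress comp_lfunDr comp_lfunDl -comp_lfunZr -comp_lfunZl.
Qed.

Lemma compress_alternating u : s_alternating s u -> s_alternating t (compress u).
Proof.
move=> hu c; rewrite /t compressE (formBr hb) hu hprojE !formE.
move: (subvsP c); rewrite mem_hperp => /andP[/eqP xc /eqP zc].
by rewrite (form_skew hb halt _ z) (form_skew hb halt _ x) xc zc oppr0 !mulr0 !subrr.
Qed.

(* An eigenvector [c] of the compression is, up to a multiple of [x], an *)
(* eigenvector of [u]: [u (c - (mu / l) x) = l (c - (mu / l) x)].        *)
Lemma compress_trivial_spectrum u :
  s_alternating s u -> trivial_spectrum u -> u x = 0 -> trivial_spectrum (compress u).
Proof.
move=> hu hsp ux0; apply: no_eigenvector_trivial_spectrum => l c l0 /(congr1 vsval).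
rewrite compressE linearZ /= hprojE (s_alternating_adj hs.1 hu) ux0 formE.
set c0 := vsval c; set mu := s z (u c0); rewrite scale0r sub0r opprK => uc0.
have uc0' : u (c0 - (mu / l) *: x) = l *: (c0 - (mu / l) *: x).
  rewrite linearB linearZ /= ux0 scaler0 subr0 -[u c0](addrK (mu *: x)) uc0.
  by rewrite scalerBr scalerA mulrCA mulfV // mulr1.
have /eqP := trivial_spectrum_eigenvector hsp l0 uc0'; rewrite subr_eq0 => /eqP c0x.
move: (subvsP c); rewrite -/c0 mem_hperp c0x !formE hyperbolic_zx mulrN1 oppr_eq0.
by move=> /andP[_ /eqP ml0]; apply: subvs_inj; rewrite linear0 -/c0 c0x ml0 scale0r.
Qed.

Section Reduction.
Variable S : {vspace 'End(V)}.
Hypotheses (hSA : forall u, u \in S -> s_alternating s u)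
           (hST : forall u, u \in S -> trivial_spectrum u).
Hypothesis hF : card_at_least F (\dim {:V} - 1).

Let evx := linfun (linear_of (eval_linear x)).
Let evz := linfun (linear_of (eval_linear z)).
Let Psi := linfun (linear_of compress_linear).
Let K := (S :&: lker evx)%VS.
Let K0 := (K :&: lker Psi)%VS.

Lemma memK u : (u \in K) = (u \in S) && (u x == 0).
Proof. by rewrite memv_cap memv_ker linear_ofE. Qed.

Lemma memK0 v : v \in K0 -> [/\ v \in S, v x = 0 & forall c, c \in C -> p (v c) = v c].
Proof.
rewrite memv_cap memK memv_ker linear_ofE => /andP[/andP[vS /eqP vx0] /eqP Psiv0].
split=> // c cC; have := compressE v (vsproj C c).
by rewrite Psiv0 zero_lfunE linear0 vsprojK // => /eqP; rewrite eq_sym subr_eq0 => /eqP.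
Qed.

Lemma K0_form v b : v \in K0 -> v b = s x b *: v z - s (v z) b *: x.
Proof.
case/memK0 => vS vx0 pv; have adj := s_alternating_adj hs.1 (hSA vS).
have vzz : s (v z) z = 0 by rewrite -adj hSA.
have vzx : s (v z) x = 0 by rewrite -adj vx0 formE.
have vC c : c \in C -> v c = - s (v z) c *: x.
  by move=> cC; rewrite -pv // hprojE adj vx0 formE scale0r sub0r -adj scaleNr.
rewrite -{1}(subrK (p b) b) (linearD v) [X in X + _]vC ?hperp_sub_hproj //.
rewrite hprojE (linearB v) !(linearZZ v) /= vx0 scaler0 subr0 !formE vzz vzx.
by rewrite !mulr0 subrr subr0 scaleNr addrC.
Qed.

(* For [l a - u a = v z], [s (v z) a = 0] so [v a = s x a *: v z]; then      *)
(* [a] is an eigenvector of [u + (s x a)^-1 v] for [l], forcing [s x a = 0].  *)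
Lemma K0_orthogonal u v : u \in S -> v \in K0 -> s x (u (v z)) = 0.
Proof.
move=> uS vK0; have [vS vx0 _] := memK0 vK0.
apply: (resolvent_orthogonal hs (hSA uS) (hST uS) hF).
  by rewrite (s_alternating_adj hs.1 (hSA vS)) vx0 formE.
move=> l a l0 resa; apply/eqP; apply: contraT => xa0.
have vza : s (v z) a = 0.
  by rewrite -resa !formE halt mulr0 sub0r (form_skew hb halt (u a)) opprK hSA.
have va : v a = s x a *: v z by rewrite K0_form // vza scale0r subr0.
have uvS : u + (s x a)^-1 *: v \in S by rewrite rpredD // rpredZ.
suff /eqP : (s x a)^-1 *: a = 0.
  by rewrite scaler_eq0 invr_eq0 (negPf xa0) => /eqP a0; move: xa0; rewrite a0 formE eqxx.
apply: (trivial_spectrum_eigenvector (hST uvS) l0).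
rewrite !lfun_simp /= !linearZ /= va [(s x a)^-1 *: (s x a *: v z)]scalerA mulVf // scale1r.
by rewrite -scalerDr -resa addrC subrK.
Qed.

Lemma dim_evz_K0 : \dim (evz @: K0) = \dim K0.
Proof.
apply: limg_dim_eq; apply/eqP; rewrite -subv0; apply/subvP => v.
rewrite memv_cap memv_ker linear_ofE memv0 => /andP[vK0 /eqP vz0].
by apply/eqP/lfunP => b; rewrite K0_form // vz0 !formE scaler0 scale0r subr0 zero_lfunE.
Qed.

Lemma x_notin_evx : x \notin (evx @: S)%VS.
Proof.
apply/memv_imgP => -[u uS]; rewrite linear_ofE => /esym/eqP.
rewrite -[X in _ == X]scale1r => /eqP/(trivial_spectrum_eigenvector (hST uS) (oner_neq0 _)).
by apply/eqP; apply: hyperbolic_x_neq0.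
Qed.

Lemma x_notin_evz : x \notin (evz @: K0)%VS.
Proof.
apply/memv_imgP => -[v vK0]; rewrite linear_ofE => vzx; have [vS _ _] := memK0 vK0.
by move: (hSA vS z); rewrite -vzx hyperbolic_zx => /eqP; rewrite oppr_eq0 oner_eq0.
Qed.

(* [x], [u x] and [v z] ([u] in [S], [v] in [K0]) are pairwise [s]-orthogonal. *)
Lemma dim_evx_evz : ((\dim (evx @: S)).+1 + (\dim (evz @: K0)).+1 <= \dim {:V})%N.
Proof.
rewrite -(dimv_add_line x_notin_evx) -(dimv_add_line x_notin_evz).
apply: (dimv_orthogonal hb halt hs.2) => a b.
case/memv_addP => _ /memv_imgP [u uS ->] [_ /vlineP [al ->] ->].
case/memv_addP => _ /memv_imgP [v vK0 ->] [_ /vlineP [be ->] ->].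
have [vS vx0 _] := memK0 vK0; rewrite !linear_ofE.
have uxvz : s (u x) (v z) = 0 by rewrite -(s_alternating_adj hs.1 (hSA uS)) K0_orthogonal.
have uxx : s (u x) x = 0 by apply/eqP; rewrite (form_skew hb halt) oppr_eq0 hSA.
have xvz : s x (v z) = 0 by rewrite (s_alternating_adj hs.1 (hSA vS)) vx0 formE.
by rewrite !formE uxvz uxx xvz halt !mulr0 !addr0.
Qed.

Lemma compress_K_alternating w : w \in (Psi @: K)%VS -> s_alternating t w.
Proof.
case/memv_imgP => u; rewrite memK linear_ofE => /andP[uS _] ->.
exact/compress_alternating/hSA.
Qed.

Lemma compress_K_trivial_spectrum w : w \in (Psi @: K)%VS -> trivial_spectrum w.
Proof.
case/memv_imgP => u; rewrite memK linear_ofE => /andP[uS /eqP ux0] ->.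
exact: compress_trivial_spectrum (hSA uS) (hST uS) ux0.
Qed.

Lemma dim_le_compress_K : (\dim S <= \dim (Psi @: K) + (\dim {:V} - 2))%N.
Proof.
rewrite -(limg_ker_dim evx S) -/K -(limg_ker_dim Psi K) -/K0 -dim_evz_K0.
by have := dim_evx_evz; lia.
Qed.

Lemma symplectic_reduction :
  exists (W : vectType F) (t : W -> W -> F) (T : {vspace 'End(W)}),
    [/\ \dim {:W} = (\dim {:V} - 2)%N, symplectic_form t,
        forall w, w \in T -> s_alternating t w,
        forall w, w \in T -> trivial_spectrum w
      & (\dim S <= \dim T + (\dim {:V} - 2))%N].
Proof.
exists W, t, (Psi @: K)%VS; split.
- exact: dim_hperp_space.
- exact: hperp_symplectic.
- exact: compress_K_alternating.
- exact: compress_K_trivial_spectrum.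
- exact: dim_le_compress_K.
Qed.

End Reduction.
End HyperbolicPair.

Unset Implicit Arguments.

Theorem theorem2 (F : fieldType) (n : nat) (hF : card_at_least F (2 * n - 1))
  (V : vectType F) (hV : \dim (fullv : {vspace V}) = (2 * n)%N)
  (s : V -> V -> F) (hs : symplectic_form s)
  (S : {vspace 'End(V)})
  (hSA : forall u : 'End(V), u \in S -> s_alternating s u)
  (hST : forall u : 'End(V), u \in S -> trivial_spectrum u) :
  (\dim S <= n * (n - 1))%N.
Proof.
elim: n => [|m IH] in hF V hV s hs S hSA hST *.
  apply: leq_trans (dimvS (subvf S)) _.
  by rewrite dimvf; change (dim V * dim V <= 0)%N; rewrite -dimvf hV.
have [x [z hxz]] : exists x z, s x z = 1.
  by apply: (exists_hyperbolic_pair hs.1.1 hs.2); rewrite hV.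
have hFV : card_at_least F (\dim {:V} - 1) by rewrite hV.
have [W [t [T [dimW ht hTA hTT leST]]]] := symplectic_reduction hs hxz hSA hST hFV.
have hFm : card_at_least F (2 * m - 1) by apply: card_at_least_le hF; lia.
have dimW' : \dim {:W} = (2 * m)%N by rewrite dimW hV; lia.
have := IH hFm W dimW' t ht T hTA hTT.
by move: leST; rewrite hV; nia.
Qed.
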